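(* Let $n\geq 10^6$ and let $K_{2n+1}$ be ND-coloured. Let $T$ be a tree on $n+1$ vertices containing a vertex $v_1$ which is adjacent to at least $2n/3$ leaves. Then $K_{2n+1}$ contains a rainbow copy of $T$.
   Context: The ND-colouring of $K_{2n+1}$: vertex set $\{0,1,\dots,2n\}$, and the edge $ij$ receives colour $k\in\{1,\dots,n\}$ where $i-j\equiv \pm k \pmod{2n+1}$. A subgraph is rainbow if all its edges have distinct colours. *)

From mathcomp Require Import all_boot.
Set Implicit Arguments. Unset Strict Implicit. Unset Printing Implicit Defensive.

Definition simple_graph (V : finType) (e : rel V) : Prop :=
  symmetric e /\ irreflexive e.

Definition num_edges (V : finType) (e : rel V) : nat :=
  #|[set p : V * V | e p.1 p.2]| %/ 2.

Definition is_tree (V : finType) (e : rel V) : Prop :=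
  simple_graph e /\ 0 < #|V| /\
  (forall x y : V, connect e x y) /\ num_edges e = #|V| - 1.

Definition degree (V : finType) (e : rel V) (v : V) : nat := #|[set w | e v w]|.

Definition is_leaf (V : finType) (e : rel V) (v : V) : bool := degree e v == 1.

Definition leaf_nbrs (V : finType) (e : rel V) (v : V) : nat :=
  #|[set w | e v w && is_leaf e w]|.

(* ND-colouring of K_{2n+1} on vertex set {0,...,2n}: edge ij gets colour
   k in {1..n} with i - j = +-k (mod 2n+1). *)
Definition nd_colour (n : nat) (i j : 'I_(2 * n + 1)) : nat :=
  let d := (i + (2 * n + 1) - j) %% (2 * n + 1) in minn d (2 * n + 1 - d).
Arguments nd_colour n i j : clear implicits.

Definition rainbow_copy (n : nat) (V : finType) (e : rel V)
    (f : V -> 'I_(2 * n + 1)) : Prop :=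
  injective f /\
  forall x y u w : V, e x y -> e u w ->
    nd_colour n (f x) (f y) = nd_colour n (f u) (f w) ->
    (x = u /\ y = w) \/ (x = w /\ y = u).
Arguments rainbow_copy n {V} e f.

From mathcomp Require Import all_boot all_order ssralg ssrnum ssrint zify.
Set Implicit Arguments. Unset Strict Implicit. Unset Printing Implicit Defensive.

(* Root the tree at v1 and let W consist of v1 and all vertices other than the
   leaves hanging at v1, so that 3 (|W| - 1) <= n.  Adding the vertices of W in
   order of depth, place them injectively in {0, ..., n}, v1 at 0, so that the
   differences between a vertex and its parent are pairwise distinct: a new
   vertex whose parent sits at a must avoid the occupied positions and a +- each
   existing difference, fewer than n + 1 values.  On {0, ..., n} the ND colour
   is the difference, so W is rainbow.  The n + 1 - |W| colours of {1, ..., n}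
   left unused go to the leaves at v1; as every edge of a tree joins a vertex
   to its parent, the whole tree is then rainbow.  The argument works for
   every n. *)

Lemma nd_colourE n (i j : 'I_(2 * n + 1)) :
  nd_colour n i j = minn `|i - j| (2 * n + 1 - `|i - j|).
Proof.
rewrite /nd_colour; have := ltn_ord i; have := ltn_ord j.
case: (leqP j i) => ji lt_j lt_i.
  have -> : i + (2 * n + 1) - j = i - j + (2 * n + 1) by lia.
  by rewrite modnDr modn_small; lia.
by rewrite modn_small; lia.
Qed.

Lemma nd_colourC n (i j : 'I_(2 * n + 1)) : nd_colour n i j = nd_colour n j i.
Proof. by rewrite !nd_colourE; lia. Qed.

Lemma nd_colour_small n (i j : 'I_(2 * n + 1)) :
  i <= n -> j <= n -> nd_colour n i j = `|i - j|.
Proof. by rewrite nd_colourE; lia. Qed.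

Lemma nd_colour_at0 n (i j : 'I_(2 * n + 1)) k :
  j = 0 :> nat -> 0 < k <= n -> i = k :> nat \/ i = 2 * n + 1 - k :> nat ->
  nd_colour n i j = k.
Proof. by rewrite nd_colourE; lia. Qed.

Lemma exists_fresh_nat (s : seq nat) m : size s < m -> exists2 q, q < m & q \notin s.
Proof.
move=> lt_s_m; case: (boolP (all (mem s) (iota 0 m))) => [/allP sub | ].
  by have := uniq_leq_size (iota_uniq 0 m) sub; rewrite size_iota leqNgt lt_s_m.
by case/allPn => q; rewrite mem_iota => /andP[_ lt_q_m] q_s; exists q.
Qed.

Lemma exists_injection (T1 T2 : finType) (A : {set T1}) (B : {set T2}) (b0 : T2) :
  #|A| <= #|B| ->
  exists2 h : T1 -> T2, {in A &, injective h} & {in A, forall x, h x \in B}.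
Proof.
move=> le_AB; pose h x := nth b0 (enum B) (index x (enum A)).
have idx_lt x : x \in A -> index x (enum A) < size (enum B).
  by move=> xA; rewrite -cardE (leq_trans _ le_AB) // cardE index_mem mem_enum.
exists h => [x y xA yA /eqP | x xA]; last by rewrite -mem_enum mem_nth ?idx_lt.
rewrite nth_uniq ?enum_uniq ?idx_lt // => /eqP eq_idx.
have nthK z : z \in A -> nth x (enum A) (index z (enum A)) = z.
  by move=> zA; rewrite nth_index ?mem_enum.
by rewrite -(nthK x xA) -(nthK y yA) eq_idx.
Qed.

Section BreadthFirstTree.

Variables (V : finType) (e : rel V) (r : V).
Hypothesis e_sym : symmetric e.
Hypothesis r_connect : forall x, connect e r x.

Definition walk_from_root k x := [exists t : k.-tuple V, path e r t && (last r t == x)].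

Lemma walk_from_root_exists x : exists k, walk_from_root k x.
Proof.
case/connectP: (r_connect x) => t e_t ->.
by exists (size t); apply/existsP; exists (in_tuple t); rewrite e_t eqxx.
Qed.

Definition depth x := ex_minn (walk_from_root_exists x).

Lemma depth_min k x : walk_from_root k x -> depth x <= k.
Proof. by rewrite /depth; case: ex_minnP => m _; apply. Qed.

Lemma closer_neighbour v : v != r -> exists u, e v u && (depth u < depth v).
Proof.
rewrite {2}/depth; case: ex_minnP => k /existsP[[t /= /eqP <-] /andP[]] + + _.
case/lastP: t => [_ /= /eqP -> | t u]; first by rewrite eqxx.
rewrite rcons_path last_rcons size_rcons => /andP[e_t e_last] /eqP <- _.
exists (last r t); rewrite e_sym e_last ltnS depth_min //.
by apply/existsP; exists (in_tuple t); rewrite e_t eqxx.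
Qed.

Definition parent v :=
  if v == r then r else odflt r [pick u | e v u && (depth u < depth v)].

Lemma parent_root : parent r = r.
Proof. by rewrite /parent eqxx. Qed.

Lemma parentP v : v != r -> e v (parent v) /\ depth (parent v) < depth v.
Proof.
move=> v_r; rewrite /parent (negbTE v_r).
case: pickP => [u /andP[] // | none].
by case: (closer_neighbour v_r) => u; rewrite none.
Qed.

End BreadthFirstTree.

Definition parent_closed (V : finType) (p : V -> V) (X : {set V}) :=
  {in X, forall x, p x \in X}.

Section TreeEdges.

Variables (V : finType) (e : rel V) (r : V) (p : V -> V) (d : V -> nat).
Hypothesis e_simple : simple_graph e.
Hypothesis e_num_edges : num_edges e = #|V| - 1.
Hypothesis p_edge : forall v, v != r -> e v (p v).
Hypothesis p_depth : forall v, v != r -> d (p v) < d v.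

Let up := [set (v, p v) | v in [set~ r]].
Let down := [set (p v, v) | v in [set~ r]].

Lemma card_parent_arcs : #|up :|: down| = 2 * (#|V| - 1).
Proof.
have card_arcs f : injective f -> #|[set f v | v in [set~ r]]| = #|V| - 1.
  by move=> f_inj; rewrite card_imset // cardsC1 subn1.
rewrite cardsU !card_arcs => [|u w /(congr1 snd) //|u w /(congr1 fst) //].
suff /eqP -> : up :&: down == set0 by rewrite cards0; lia.
apply/set0Pn => -[[a b] /setIP[/imsetP[u + [-> ->]] /imsetP[w + [u_pw pu_w]]]].
rewrite !inE => u_r w_r.
by have := p_depth u_r; have := p_depth w_r; rewrite -u_pw pu_w; lia.
Qed.

(* The 2 (|V| - 1) parent arcs already exhaust the arcs of [e]. *)
Lemma tree_edge_parent x y : e x y -> (x != r /\ y = p x) \/ (y != r /\ x = p y).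
Proof.
case: e_simple => e_sym e_irr exy.
have arc_sym a b : ((a, b) \in up :|: down) = ((b, a) \in up :|: down).
  by apply/idP/idP; rewrite !inE => /orP[] /imsetP[u u_r [-> ->]]; apply/orP;
    [right | left | right | left]; apply/imsetP; exists u.
case: (boolP ((x, y) \in up :|: down)) => [| xy_new].
  by rewrite !inE => /orP[] /imsetP[u + [-> ->]]; rewrite !inE; [left | right].
have yx_new : (y, x) \notin up :|: down by rewrite -arc_sym.
have xy_yx : (x, y) != (y, x) by apply: contraTneq exy => -[->]; rewrite e_irr.
pose arcs := [set a : V * V | e a.1 a.2].
have sub : (up :|: down) :|: [set (x, y); (y, x)] \subset arcs.
  apply/subsetP => -[a b]; rewrite !inE /=.
  case/orP => [/orP[] /imsetP[u + [-> ->]] | /orP[] /eqP[-> ->]] //.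
  - by rewrite in_setC1 => u_r; apply: p_edge.
  - by rewrite in_setC1 e_sym => u_r; apply: p_edge.
  - by rewrite e_sym.
have disj : (up :|: down) :&: [set (x, y); (y, x)] = set0.
  apply/eqP; rewrite setI_eq0 disjoint_sym disjoints_subset subUset !sub1set.
  by rewrite !in_setC xy_new yx_new.
have := subset_leq_card sub; rewrite cardsU disj cards0 card_parent_arcs cards2 xy_yx.
by move: e_num_edges; rewrite /num_edges -/arcs; lia.
Qed.

End TreeEdges.

Lemma leaf_neighbour_unique (V : finType) (e : rel V) s x y :
  is_leaf e s -> e s x -> e s y -> x = y.
Proof.
move=> /cards1P[z N_s] sx sy.
have : x \in [set w | e s w] by rewrite inE.
have : y \in [set w | e s w] by rewrite inE.
by rewrite N_s !inE => /eqP-> /eqP->.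
Qed.

Section RootLeaves.

Variables (V : finType) (e : rel V) (r : V) (p : V -> V).
Hypothesis e_simple : simple_graph e.
Hypothesis p_root : p r = r.
Hypothesis p_edge : forall v, v != r -> e v (p v).

Let root_leaves := [set s | e r s && is_leaf e s].

Lemma parent_root_leaf : {in root_leaves, forall s, p s = r}.
Proof.
case: e_simple => e_sym e_irr s; rewrite inE => /andP[r_s s_leaf].
have s_r : s != r by apply: contraTneq r_s => ->; rewrite e_irr.
by apply: leaf_neighbour_unique s_leaf (p_edge s_r) _; rewrite e_sym.
Qed.

Lemma parent_closed_root_leavesC : parent_closed p (~: root_leaves).
Proof.
case: e_simple => e_sym e_irr x _; rewrite !inE; apply/negP => /andP[r_px px_leaf].
case: (eqVneq x r) => [x_r | x_r]; first by move: r_px; rewrite x_r p_root e_irr.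
have px_x : e (p x) x by rewrite e_sym p_edge.
have px_r : e (p x) r by rewrite e_sym.
by move/eqP: x_r; apply; apply: leaf_neighbour_unique px_leaf px_x px_r.
Qed.

End RootLeaves.

Section RainbowLabelling.

Variables (V : finType) (r : V) (p : V -> V) (n : nat).

Definition rainbow_labelling (X : {set V}) (g : V -> nat) :=
  [/\ g r = 0, {in X, forall x, g x <= n}, {in X &, injective g}
    & {in X :\ r &, injective (fun x => `|g x - g (p x)|)}].

Lemma rainbow_labelling_extend (X : {set V}) x (g : V -> nat) :
  r \in X -> parent_closed p X -> x \notin X -> p x \in X -> 3 * #|X| <= n ->
  rainbow_labelling X g -> exists g', rainbow_labelling (x |: X) g'.
Proof.
move=> rX closedX xX pxX small [g_r g_le g_inj diff_inj].
set a := g (p x); pose diff y := `|g y - g (p y)|.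
pose values (f : V -> nat) := [seq f y | y <- enum X].
have [q lt_q_n] : exists2 q, q < n.+1 &
    q \notin values g ++ values (fun y => a + diff y) ++ values (fun y => a - diff y).
  by apply: exists_fresh_nat; rewrite !size_cat !size_map -cardE; lia.
rewrite !mem_cat !negb_or => /and3P[q_g q_plus q_minus].
have q_new y : y \in X -> g y != q.
  by move=> yX; apply: contraNneq q_g => <-; apply: map_f; rewrite mem_enum.
have q_diff y : y \in X -> diff y != `|q - a|.
  move=> yX; apply/eqP => diff_y.
  have [le_a_q | lt_q_a] := leqP a q.
    by move/negP: q_plus; apply; apply/mapP; exists y; rewrite ?mem_enum //; lia.
  by move/negP: q_minus; apply; apply/mapP; exists y; rewrite ?mem_enum //; lia.
pose g' z := if z == x then q else g z.
have g'E : {in X, g' =1 g} by move=> z zX; rewrite /g' ifN //; apply: contraNneq xX => <-.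
have g'_x : g' x = q by rewrite /g' eqxx.
exists g'; split.
- by rewrite g'E.
- move=> z /setU1P[-> | zX]; first by rewrite g'_x -ltnS.
  by rewrite g'E ?g_le.
- move=> z w /setU1P[-> | zX] /setU1P[-> | wX] //; rewrite ?g'_x ?g'E //.
  + by move=> q_gw; move: (q_new w wX); rewrite q_gw eqxx.
  + by move=> gz_q; move: (q_new z zX); rewrite gz_q eqxx.
  + exact: g_inj.
- have diffE z : z \in X -> `|g' z - g' (p z)| = diff z by move=> zX; rewrite !g'E ?closedX.
  have diff_x : `|g' x - g' (p x)| = `|q - a| by rewrite g'_x g'E.
  move=> z w; rewrite !in_setD1 !in_setU1.
  move=> /andP[z_r /orP[/eqP-> | zX]] /andP[w_r /orP[/eqP-> | wX]] //=; rewrite ?diff_x ?diffE //.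
  + by move=> qa_w; move: (q_diff w wX); rewrite qa_w eqxx.
  + by move=> z_qa; move: (q_diff z zX); rewrite z_qa eqxx.
  + by apply: diff_inj; rewrite in_setD1 ?z_r ?w_r.
Qed.

Variable d : V -> nat.
Hypothesis p_root : p r = r.
Hypothesis p_depth : forall v, v != r -> d (p v) < d v.

Lemma parent_closedD1 (X : {set V}) x : parent_closed p X -> x != r ->
  {in X :\ r, forall y, d y <= d x} -> parent_closed p (X :\ x).
Proof.
move=> closedX x_r deepest y; rewrite !in_setD1 => /andP[y_x yX].
rewrite closedX // andbT; apply/eqP => py_x.
have y_r : y != r by apply: contra_neq x_r => y_r; rewrite -py_x y_r.
have := p_depth y_r; rewrite py_x ltnNge deepest //.
by rewrite in_setD1 y_r.
Qed.

Lemma exists_rainbow_labelling (X : {set V}) :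
  r \in X -> parent_closed p X -> 3 * (#|X| - 1) <= n -> exists g, rainbow_labelling X g.
Proof.
have [k] := ubnP #|X|; elim: k X => // k IH X card_X rX closedX small.
have [X_r | [x0 x0X]] := set_0Vmem (X :\ r).
  have only_r y : y \in X -> y = r.
    by move=> yX; apply/eqP; move/setP/(_ y): X_r; rewrite !inE yX andbT => /negbFE.
  exists (fun _ => 0); split=> // [y z /only_r-> /only_r-> // | y z].
  by rewrite X_r inE.
have [x xX deepest] := arg_maxnP d x0X.
have [x_r {}xX] : x != r /\ x \in X by apply/andP; rewrite -in_setD1.
have px_x : p x != x by apply: contraTneq (p_depth x_r) => ->; rewrite ltnn.
have card_Xx : #|X| = #|X :\ x|.+1 by rewrite (cardsD1 x X) xX.
have closedXx := parent_closedD1 closedX x_r deepest.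
have rXx : r \in X :\ x by rewrite in_setD1 eq_sym x_r.
have [g lab] : exists g, rainbow_labelling (X :\ x) g.
  by apply: IH => //; move: card_X small; rewrite card_Xx; lia.
have pxXx : p x \in X :\ x by rewrite in_setD1 px_x closedX.
have [|g' lab'] := rainbow_labelling_extend rXx closedXx (negbT (setD11 x X)) pxXx _ lab.
  by move: small; rewrite card_Xx; lia.
by exists g'; rewrite setD1K in lab'.
Qed.

End RainbowLabelling.

Section LeafAttachment.

Variables (V : finType) (r : V) (p : V -> V) (n : nat) (W : {set V}) (g : V -> nat).
Hypothesis p_root : p r = r.
Hypothesis rW : r \in W.
Hypothesis closedW : parent_closed p W.
Hypothesis g_lab : rainbow_labelling r p n W g.
Hypothesis leaf_parent : {in ~: W, forall s, p s = r}.
Hypothesis card_V : #|V| = n.+1.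

Let parent_colours : {set 'I_n.+1} := [set inord `|g w - g (p w)| | w in W].

Lemma card_leaves_le_free_colours : #|~: W| <= #|~: parent_colours|.
Proof.
have : #|parent_colours| <= #|W| := leq_imset_card _ _.
have := cardsC W; have := cardsC parent_colours.
by rewrite card_ord card_V; lia.
Qed.

Section Placement.

Variable h : V -> 'I_n.+1.
Hypothesis h_inj : {in ~: W &, injective h}.
Hypothesis h_free : {in ~: W, forall s, h s \in ~: parent_colours}.

Lemma parent_colourK w :
  w \in W -> (inord `|g w - g (p w)| : 'I_n.+1) = `|g w - g (p w)| :> nat.
Proof.
case: g_lab => _ g_le _ _ wW; rewrite inordK // ltnS.
by have := g_le w wW; have := g_le (p w) (closedW wW); lia.
Qed.

Lemma free_colour_new s w : s \notin W -> w \in W -> h s != `|g w - g (p w)| :> nat.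
Proof.
move=> sW wW; have : h s \in ~: parent_colours by apply: h_free; rewrite inE.
apply: contraTneq => hs_w; rewrite inE negbK; apply/imsetP.
by exists w => //; apply: val_inj => /=; rewrite parent_colourK.
Qed.

Lemma free_colour_pos s : s \notin W -> 0 < h s.
Proof.
case: g_lab => g_r _ _ _ sW.
by have := free_colour_new sW rW; rewrite p_root g_r lt0n.
Qed.

(* Both [k] and [2n + 1 - k] are at ND-distance [k] from position [0], where the root sits. *)
Definition leaf_place s := if [exists w in W, g w == h s] then 2 * n + 1 - h s else h s.

Definition place v := if v \in W then g v else leaf_place v.

Lemma place_in v : v \in W -> place v = g v.
Proof. by rewrite /place => ->. Qed.

Lemma place_out v : v \notin W -> place v = leaf_place v.
Proof. by rewrite /place => /negbTE ->. Qed.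

Lemma leaf_placeE s : leaf_place s = h s \/ leaf_place s = 2 * n + 1 - h s.
Proof. by rewrite /leaf_place; case: ifP; [right | left]. Qed.

Lemma leaf_place_new s w : s \notin W -> w \in W -> leaf_place s != g w.
Proof.
case: g_lab => _ g_le _ _ sW wW; rewrite /leaf_place; case: ifP => [_ | /existsPn/(_ w)].
  by have := g_le w wW; have := free_colour_pos sW; have := ltn_ord (h s); lia.
by rewrite wW /= eq_sym.
Qed.

Lemma place_lt v : place v < 2 * n + 1.
Proof.
rewrite /place; case: ifP => [vW | /negbT vW].
  by case: g_lab => _ g_le _ _; have := g_le v vW; lia.
by have := leaf_placeE v; have := ltn_ord (h v); have := free_colour_pos vW; lia.
Qed.

Lemma place_inj : injective place.
Proof.
case: g_lab => _ _ g_inj _ v w; rewrite /place.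
case: (boolP (v \in W)) => vW; case: (boolP (w \in W)) => wW.
- exact: g_inj.
- by move=> gv; move: (leaf_place_new wW vW); rewrite gv eqxx.
- by move=> vg; move: (leaf_place_new vW wW); rewrite vg eqxx.
have := leaf_placeE v; have := leaf_placeE w.
have := free_colour_pos vW; have := free_colour_pos wW.
have := ltn_ord (h v); have := ltn_ord (h w).
move=> ? ? ? ? ? ? eq_place; apply: h_inj; rewrite ?inE //; apply: ord_inj; lia.
Qed.

Definition embedding v : 'I_(2 * n + 1) := Ordinal (place_lt v).

Lemma embedding_colour v : v != r ->
  nd_colour n (embedding v) (embedding (p v)) = if v \in W then `|g v - g (p v)| else h v.
Proof.
case: g_lab => g_r g_le _ _ v_r; rewrite /embedding.
case: (boolP (v \in W)) => vW.
  by rewrite nd_colour_small /= !place_in ?closedW ?g_le ?closedW.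
apply: nd_colour_at0 => /=.
- by rewrite leaf_parent ?inE // place_in.
- by rewrite free_colour_pos // -ltnS ltn_ord.
- by rewrite place_out //; apply: leaf_placeE.
Qed.

Lemma embedding_colour_inj :
  {in [set~ r] &, injective (fun v => nd_colour n (embedding v) (embedding (p v)))}.
Proof.
case: g_lab => _ _ _ diff_inj v w; rewrite !in_setC1 => v_r w_r /=.
rewrite !embedding_colour //.
case: (boolP (v \in W)) => vW; case: (boolP (w \in W)) => wW.
- by apply: diff_inj; rewrite in_setD1 ?v_r ?w_r.
- by move=> vh; move: (free_colour_new wW vW); rewrite vh eqxx.
- by move=> hv; move: (free_colour_new vW wW); rewrite hv eqxx.
by move/val_inj; apply: h_inj; rewrite inE.
Qed.

End Placement.

Lemma exists_rainbow_embedding : exists2 f : V -> 'I_(2 * n + 1),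
  injective f & {in [set~ r] &, injective (fun v => nd_colour n (f v) (f (p v)))}.
Proof.
have [h h_inj h_free] := exists_injection ord0 card_leaves_le_free_colours.
exists (embedding h_free); last exact: embedding_colour_inj.
by move=> v w /(congr1 val) /(place_inj h_inj h_free).
Qed.

End LeafAttachment.

Lemma rainbow_copy_of_parent_colours n (V : finType) (e : rel V) r p
    (f : V -> 'I_(2 * n + 1)) :
  (forall x y, e x y -> (x != r /\ y = p x) \/ (y != r /\ x = p y)) -> injective f ->
  {in [set~ r] &, injective (fun v => nd_colour n (f v) (f (p v)))} -> rainbow_copy n e f.
Proof.
move=> edge_parent f_inj colour_inj; split=> // x y u w /edge_parent exy /edge_parent euw.
have colour_parent z z' : z != r -> z' != r ->
    nd_colour n (f z) (f (p z)) = nd_colour n (f z') (f (p z')) -> z = z'.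
  by move=> z_r z'_r; apply: colour_inj; rewrite in_setC1.
case: exy => -[z_r ->]; case: euw => -[z'_r ->];
  rewrite ?[nd_colour n (f (p _)) _]nd_colourC => /colour_parent -> //; by [left | right].
Qed.

Theorem theorem2p3 (n : nat) (V : finType) (e : rel V) (v1 : V) :
  10 ^ 6 <= n ->
  #|V| = n.+1 ->
  is_tree e ->
  2 * n <= 3 * leaf_nbrs e v1 ->
  exists f : V -> 'I_(2 * n + 1), rainbow_copy n e f.
Proof.
move=> _ card_V [[e_sym e_irr] [_ [e_conn e_num_edges]]] many_leaves.
have v1_conn := e_conn v1.
pose p := parent v1_conn.
have p_root : p v1 = v1 := parent_root v1_conn.
have p_edge v : v != v1 -> e v (p v) by move=> v_v1; case: (parentP e_sym v1_conn v_v1).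
have p_depth v : v != v1 -> depth v1_conn (p v) < depth v1_conn v.
  by move=> v_v1; case: (parentP e_sym v1_conn v_v1).
pose W := ~: [set s | e v1 s && is_leaf e s].
have W_v1 : v1 \in W by rewrite !inE e_irr.
have closedW : parent_closed p W := parent_closed_root_leavesC (conj e_sym e_irr) p_root p_edge.
have small : 3 * (#|W| - 1) <= n.
  by move: many_leaves; rewrite /leaf_nbrs; have := cardsC W; rewrite setCK card_V; lia.
have [g g_lab] := exists_rainbow_labelling p_root p_depth W_v1 closedW small.
have [|f f_inj colour_inj] := exists_rainbow_embedding p_root W_v1 closedW g_lab _ card_V.
  by rewrite setCK; apply: parent_root_leaf p_edge; split.
exists f; apply: rainbow_copy_of_parent_colours f_inj colour_inj.
exact: tree_edge_parent (conj e_sym e_irr) e_num_edges p_edge p_depth.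
Qed.
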